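(* Let $\sigma:\mathbb{R}\to\mathbb{R}$ be bounded and differentiable with bounded derivative. Let $d_1,d_2,\kappa,L,n,K_n\in\mathbb{N}$ with $\kappa\le\min\{d_1,d_2\}$ and $L\ge2$, and consider the network $f_{\mathbf{w}}$ described in the context with architecture $M_1=M_{L+1}=\kappa$, $M_2=\dots=M_L=1$, $k_1=\dots=k_{L-1}=2\kappa^2$, $k_0=k_L=1$. Let $(\mathbf{X}_1,Y_1),\dots,(\mathbf{X}_n,Y_n)\in[0,1]^{D}\times\{0,1\}$, let $c_4>0$, and define $$F_n(\mathbf{w})=\frac1n\sum_{i=1}^n|Y_i-f_{\mathbf{w}}(\mathbf{X}_i)|^2+c_4\sum_{k=1}^{K_n}w_k^2 .$$ Let $t_n,L_n>0$ with $t_n\ge L_n$, let $\gamma_n^*\ge1$, $B_n\ge1$, and let $\mathbf{w},\mathbf{v}$ be weight vectors such that $|w_k|\le\gamma_n^*$ for $k=1,\dots,K_n$, $|w^{(r)}_{s_2,k}|\le B_n$ and $|w^{(r)}_{t_1,t_2,s_1,s_2,k}|\le B_n$ for all indices with $r=2,\dots,L$, and $$\|\mathbf{w}-\mathbf{v}\|_\infty^2\le\frac{2t_n}{L_n}\max\{F_n(\mathbf{v}),1\}.$$ Then $$\|(\nabla_{\mathbf{w}}F_n)(\mathbf{w})\|\le c_8\cdot K_n^{3/2}\cdot B_n^{2L}\cdot(\gamma_n^* )^2\cdot\sqrt{\frac{t_n}{L_n}\max\{F_n(\mathbf{v}),1\}},$$ where $c_8>0$ is a constant not depending on $n$, $K_n$,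 $B_n$, $\gamma_n^*$, $t_n$, $L_n$, $\mathbf{w}$, $\mathbf{v}$ or the data.
   Context: $D=\{1,\dots,d_1\}\times\{1,\dots,d_2\}$ and $[0,1]^D$ is the set of families $(x_{i,j})_{(i,j)\in D}$ with entries in $[0,1]$. Network: for $k\in\{1,\dots,K_n\}$ and $(i,j)\in D$, $o^{(0)}_{(i,j),1,k}=x_{i,j}$ and for $r=1,\dots,L$, $s_2\in\{1,\dots,k_r\}$, $$o^{(r)}_{(i,j),s_2,k}=\sigma\Big(\sum_{s_1=1}^{k_{r-1}}\sum_{t_1,t_2\in\{1,\dots,M_r\},\,(i+t_1-1,j+t_2-1)\in D} w^{(r)}_{t_1,t_2,s_1,s_2,k}\, o^{(r-1)}_{(i+t_1-1,j+t_2-1),s_1,k}+w^{(r)}_{s_2,k}\Big),$$ $f_{\mathbf{w}_k,\mathbf{w}_{bias,k}}(\mathbf{x})=\frac{1}{(d_1-M_{L+1}+1)(d_2-M_{L+1}+1)}\sum_{i=1}^{d_1-M_{L+1}+1}\sum_{j=1}^{d_2-M_{L+1}+1}o^{(L)}_{(i,j),1,k}$, and $f_{\mathbf{w}}(\mathbf{x})=\sum_{k=1}^{K_n}w_kf_{\mathbf{w}_k,\mathbf{w}_{bias,k}}(\mathbf{x})$. The weight vector $\mathbf{w}$ collects all $w_k$, $w^{(r)}_{t_1,t_2,s_1,s_2,k}$, $w^{(r)}_{s_2,k}$; $\nabla_{\mathbf{w}}$ is the gradient with respect to all these components, $\|\cdot\|$ the Euclidean norm and $\|\cdot\|_\infty$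 the maximum of absolute values of components. *)

From Stdlib Require Import Reals Lra Lia.
From Coquelicot Require Import Coquelicot.
Open Scope R_scope.

(* sum1 n f = f 1 + ... + f n  (1-based, as in the paper) *)
Fixpoint sum1 (n : nat) (f : nat -> R) : R :=
  match n with O => 0 | S m => sum1 m f + f (S m) end.

(* max1 n f = max(0, f 1, ..., f n); used only for nonnegative f *)
Fixpoint max1 (n : nat) (f : nat -> R) : R :=
  match n with O => 0 | S m => Rmax (max1 m f) (f (S m)) end.

(* Indices of the components of the weight vector w:
   Wout k            = w_k
   Wconv r t1 t2 s1 s2 k = w^{(r)}_{t1,t2,s1,s2,k}
   Wbias r s2 k      = w^{(r)}_{s2,k}                                  *)
Inductive widx : Type :=
| Wout  (k : nat)
| Wconv (r t1 t2 s1 s2 k : nat)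
| Wbias (r s2 k : nat).

Definition widx_eq_dec (a b : widx) : {a = b} + {a <> b}.
Proof. decide equality; apply Nat.eq_dec. Defined.

(* A weight vector: value of each component (only indices in the valid
   ranges below are used). *)
Definition wvec := widx -> R.

Definition upd (w : wvec) (i : widx) (x : R) : wvec :=
  fun j => if widx_eq_dec i j then x else w j.

Definition Msz (kappa L r : nat) : nat :=
  if Nat.eqb r 1 then kappa else if Nat.eqb r (S L) then kappa else 1.
Definition ksz (kappa L r : nat) : nat :=
  if Nat.eqb r 0 then 1 else if Nat.eqb r L then 1 else (2 * kappa * kappa)%nat.

(* o^{(r)}_{(i,j),s2,k}; input x : pixel (i,j) |-> x_{i,j} *)
Fixpoint outp (sigma : R -> R) (d1 d2 kappa L : nat) (w : wvec)
  (x : nat -> nat -> R) (r i j s2 k : nat) {struct r} : R :=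
  match r with
  | O => x i j
  | S r' =>
      sigma (sum1 (ksz kappa L r') (fun s1 =>
               sum1 (Msz kappa L r) (fun t1 =>
               sum1 (Msz kappa L r) (fun t2 =>
                 if andb (Nat.leb (i + t1 - 1) d1) (Nat.leb (j + t2 - 1) d2)
                 then w (Wconv r t1 t2 s1 s2 k) *
                      outp sigma d1 d2 kappa L w x r' (i + t1 - 1) (j + t2 - 1) s1 k
                 else 0)))
             + w (Wbias r s2 k))
  end.

Definition fk (sigma : R -> R) (d1 d2 kappa L : nat) (w : wvec)
  (x : nat -> nat -> R) (k : nat) : R :=
  let M := Msz kappa L (S L) in
  / (INR (d1 - M + 1) * INR (d2 - M + 1)) *
  sum1 (d1 - M + 1) (fun i => sum1 (d2 - M + 1) (fun j =>
    outp sigma d1 d2 kappa L w x L i j 1 k)).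

Definition fnet (sigma : R -> R) (d1 d2 kappa L Kn : nat) (w : wvec)
  (x : nat -> nat -> R) : R :=
  sum1 Kn (fun k => w (Wout k) * fk sigma d1 d2 kappa L w x k).

(* F_n(w); data X i = image of the i-th sample, Y i its label *)
Definition Femp (sigma : R -> R) (d1 d2 kappa L n Kn : nat) (c4 : R)
  (X : nat -> nat -> nat -> R) (Y : nat -> R) (w : wvec) : R :=
  / INR n * sum1 n (fun i => (Y i - fnet sigma d1 d2 kappa L Kn w (X i)) ^ 2)
  + c4 * sum1 Kn (fun k => w (Wout k) ^ 2).

Definition sum_idx (kappa L Kn : nat) (g : widx -> R) : R :=
  sum1 Kn (fun k => g (Wout k))
  + sum1 L (fun r => sum1 (Msz kappa L r) (fun t1 => sum1 (Msz kappa L r) (fun t2 =>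
      sum1 (ksz kappa L (r - 1)) (fun s1 => sum1 (ksz kappa L r) (fun s2 =>
      sum1 Kn (fun k => g (Wconv r t1 t2 s1 s2 k)))))))
  + sum1 L (fun r => sum1 (ksz kappa L r) (fun s2 => sum1 Kn (fun k => g (Wbias r s2 k)))).

Definition max_idx (kappa L Kn : nat) (g : widx -> R) : R :=
  Rmax (max1 Kn (fun k => g (Wout k)))
  (Rmax (max1 L (fun r => max1 (Msz kappa L r) (fun t1 => max1 (Msz kappa L r) (fun t2 =>
      max1 (ksz kappa L (r - 1)) (fun s1 => max1 (ksz kappa L r) (fun s2 =>
      max1 Kn (fun k => g (Wconv r t1 t2 s1 s2 k))))))))
  (max1 L (fun r => max1 (ksz kappa L r) (fun s2 => max1 Kn (fun k => g (Wbias r s2 k)))))).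

Definition partial (F : wvec -> R) (w : wvec) (i : widx) : R :=
  Derive (fun x => F (upd w i x)) (w i).

Definition grad_norm (kappa L Kn : nat) (F : wvec -> R) (w : wvec) : R :=
  sqrt (sum_idx kappa L Kn (fun i => partial F w i ^ 2)).

Definition inf_dist (kappa L Kn : nat) (w v : wvec) : R :=
  max_idx kappa L Kn (fun i => Rabs (w i - v i)).

(* Since sigma is bounded by some V, every neuron output lies in [-V, V].  By the
   chain and product rules, the derivative of a layer-r output in a single weight is
   at most a constant times Bn^r: each layer contributes a factor |sigma'| <= Sd, a
   fan-in of at most 2 kappa^4 terms and a weight of size at most Bn, while the
   unbounded layer-1 weights only multiply raw inputs, whose derivative vanishes.
   Hence |f_w| <= K_n gam V and every partial derivative of F_n is
   O(K_n gam^2 Bn^L).  Summing the squares over the O(K_n) weights gives a gradient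
   norm of O(K_n^(3/2) gam^2 Bn^L), which is below the claimed bound because
   Bn^L <= Bn^(2L) and the square-root factor is at least 1. *)

From Stdlib Require Import Reals Lra Lia FunctionalExtensionality.
From Coquelicot Require Import Coquelicot.
Open Scope R_scope.

Definition ex_derive_le (f : R -> R) (x b : R) : Prop :=
  exists d, is_derive f x d /\ Rabs d <= b.

Lemma ex_derive_le_weaken f x b b' :
  b <= b' -> ex_derive_le f x b -> ex_derive_le f x b'.
Proof. intros Hb [d [Hd Hdb]]; exists d; split; [exact Hd | lra]. Qed.

Lemma ex_derive_le_ext f g x b :
  (forall t, f t = g t) -> ex_derive_le f x b -> ex_derive_le g x b.
Proof.
  intros E [d [Hd Hdb]]; exists d; split; [exact (is_derive_ext f g x d E Hd) | exact Hdb].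
Qed.

Lemma ex_derive_le_const (a x : R) : ex_derive_le (fun _ => a) x 0.
Proof. exists 0; split; [apply (is_derive_const a x) | rewrite Rabs_R0; lra]. Qed.

Lemma ex_derive_le_constant f x : (forall t, f t = f x) -> ex_derive_le f x 0.
Proof. intros E; apply (ex_derive_le_ext (fun _ => f x)); [auto | apply ex_derive_le_const]. Qed.

Lemma ex_derive_le_plus f g x bf bg :
  ex_derive_le f x bf -> ex_derive_le g x bg ->
  ex_derive_le (fun t => f t + g t) x (bf + bg).
Proof.
  intros [d [Hd Hdb]] [e [He Heb]]; exists (d + e); split.
  - apply (is_derive_plus f g); auto.
  - eapply Rle_trans; [apply Rabs_triang | lra].
Qed.

Lemma ex_derive_le_minus f g x bf bg :
  ex_derive_le f x bf -> ex_derive_le g x bg ->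
  ex_derive_le (fun t => f t - g t) x (bf + bg).
Proof.
  intros [d [Hd Hdb]] [e [He Heb]]; exists (d - e); split.
  - apply (is_derive_minus f g); auto.
  - eapply Rle_trans; [apply Rabs_triang | rewrite Rabs_Ropp; lra].
Qed.

Lemma ex_derive_le_mult f g x bf bg vf vg :
  ex_derive_le f x bf -> ex_derive_le g x bg ->
  Rabs (f x) <= vf -> Rabs (g x) <= vg ->
  ex_derive_le (fun t => f t * g t) x (bf * vg + vf * bg).
Proof.
  intros [d [Hd Hdb]] [e [He Heb]] Hf Hg; exists (d * g x + f x * e); split.
  - apply (is_derive_mult f g); auto. intros; apply Rmult_comm.
  - eapply Rle_trans; [apply Rabs_triang | rewrite !Rabs_mult].
    apply Rplus_le_compat; apply Rmult_le_compat; auto using Rabs_pos.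
Qed.

Lemma ex_derive_le_scal f x c b :
  ex_derive_le f x b -> ex_derive_le (fun t => c * f t) x (Rabs c * b).
Proof.
  intros [d [Hd Hdb]]; exists (c * d); split.
  - apply is_derive_scal; exact Hd.
  - rewrite Rabs_mult; apply Rmult_le_compat_l; auto using Rabs_pos.
Qed.

Lemma ex_derive_le_sqr f x b v :
  ex_derive_le f x b -> Rabs (f x) <= v -> ex_derive_le (fun t => f t ^ 2) x (2 * v * b).
Proof.
  intros Hf Hv; apply (ex_derive_le_ext (fun t => f t * f t)); [intros; ring |].
  eapply ex_derive_le_weaken; [| apply (ex_derive_le_mult f f x b b v v); auto]; lra.
Qed.

Lemma ex_derive_le_comp (s g : R -> R) x b Sd :
  (forall y, ex_derive s y) -> (forall y, Rabs (Derive s y) <= Sd) ->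
  ex_derive_le g x b -> ex_derive_le (fun t => s (g t)) x (b * Sd).
Proof.
  intros Hs HSd [d [Hd Hdb]]; exists (d * Derive s (g x)); split.
  - apply (is_derive_comp s g); [apply Derive_correct, Hs | exact Hd].
  - rewrite Rabs_mult; apply Rmult_le_compat; auto using Rabs_pos.
Qed.

Lemma sum1_ext n f g :
  (forall s, (1 <= s <= n)%nat -> f s = g s) -> sum1 n f = sum1 n g.
Proof.
  induction n as [|n IH]; intros H; simpl; [reflexivity |].
  rewrite IH, H; [reflexivity | lia | intros; apply H; lia].
Qed.

Lemma sum1_le n f g :
  (forall s, (1 <= s <= n)%nat -> f s <= g s) -> sum1 n f <= sum1 n g.
Proof.
  induction n as [|n IH]; intros H; simpl; [lra |].
  apply Rplus_le_compat; [apply IH; intros; apply H | apply H]; lia.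
Qed.

Lemma sum1_const n c : sum1 n (fun _ => c) = INR n * c.
Proof. induction n as [|n IH]; simpl sum1; [simpl; ring | rewrite IH, S_INR; ring]. Qed.

Lemma sum1_scal n c f : sum1 n (fun s => c * f s) = c * sum1 n f.
Proof. induction n as [|n IH]; simpl; [ring | rewrite IH; ring]. Qed.

Lemma sum1_ge0 n f : (forall s, (1 <= s <= n)%nat -> 0 <= f s) -> 0 <= sum1 n f.
Proof.
  intros H; apply Rle_trans with (sum1 n (fun _ => 0)).
  - rewrite sum1_const; lra.
  - apply sum1_le, H.
Qed.

Lemma Rabs_sum1_le n f c :
  (forall s, (1 <= s <= n)%nat -> Rabs (f s) <= c) -> Rabs (sum1 n f) <= INR n * c.
Proof.
  induction n as [|n IH]; intros H; simpl sum1; [rewrite Rabs_R0; simpl; lra |].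
  rewrite S_INR; eapply Rle_trans; [apply Rabs_triang |].
  assert (Rabs (sum1 n f) <= INR n * c) by (apply IH; intros; apply H; lia).
  assert (Rabs (f (S n)) <= c) by (apply H; lia).
  lra.
Qed.

Lemma sum1_indicator_le n k c :
  0 <= c -> sum1 n (fun s => if Nat.eqb s k then c else 0) <= c.
Proof.
  intros Hc; induction n as [|n IH]; cbn [sum1]; [lra |].
  destruct (Nat.eqb_spec (S n) k) as [<- | _]; [| lra].
  rewrite (sum1_ext n _ (fun _ => 0)), sum1_const; [lra |].
  intros s Hs; destruct (Nat.eqb_spec s (S n)); [lia | reflexivity].
Qed.

Lemma ex_derive_le_sum1 n (g : nat -> R -> R) x b :
  (forall s, (1 <= s <= n)%nat -> ex_derive_le (g s) x (b s)) ->
  ex_derive_le (fun t => sum1 n (fun s => g s t)) x (sum1 n b).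
Proof.
  induction n as [|n IH]; intros H; simpl; [apply ex_derive_le_const |].
  apply (ex_derive_le_plus (fun t => sum1 n (fun s => g s t)) (g (S n)));
    [apply IH; intros; apply H | apply H]; lia.
Qed.

Lemma ex_derive_le_sum1_const n (g : nat -> R -> R) x c :
  (forall s, (1 <= s <= n)%nat -> ex_derive_le (g s) x c) ->
  ex_derive_le (fun t => sum1 n (fun s => g s t)) x (INR n * c).
Proof. intros H; rewrite <- sum1_const; apply ex_derive_le_sum1, H. Qed.

Lemma Rabs_avg2_le p q (g : nat -> nat -> R) c :
  (1 <= p)%nat -> (1 <= q)%nat ->
  (forall a b, (1 <= a <= p)%nat -> (1 <= b <= q)%nat -> Rabs (g a b) <= c) ->
  Rabs (/ (INR p * INR q) * sum1 p (fun a => sum1 q (fun b => g a b))) <= c.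
Proof.
  intros Hp Hq H.
  assert (0 < INR p) by (apply lt_0_INR; lia).
  assert (0 < INR q) by (apply lt_0_INR; lia).
  assert (Hs : Rabs (sum1 p (fun a => sum1 q (fun b => g a b))) <= INR p * (INR q * c))
    by (apply Rabs_sum1_le; intros; apply Rabs_sum1_le; intros; apply H; auto).
  rewrite Rabs_mult, Rabs_inv, Rabs_mult, !Rabs_pos_eq by lra.
  apply (Rmult_le_reg_l (INR p * INR q)); [nra |].
  field_simplify; lra.
Qed.

Lemma ex_derive_le_avg2 p q (g : nat -> nat -> R -> R) x c :
  (1 <= p)%nat -> (1 <= q)%nat ->
  (forall a b, (1 <= a <= p)%nat -> (1 <= b <= q)%nat -> ex_derive_le (g a b) x c) ->
  ex_derive_le (fun t => / (INR p * INR q) * sum1 p (fun a => sum1 q (fun b => g a b t))) x c.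
Proof.
  intros Hp Hq H.
  assert (0 < INR p) by (apply lt_0_INR; lia).
  assert (0 < INR q) by (apply lt_0_INR; lia).
  eapply ex_derive_le_weaken; [| apply ex_derive_le_scal;
    apply ex_derive_le_sum1_const; intros a Ha;
    apply ex_derive_le_sum1_const; intros b Hb; apply H; auto].
  rewrite Rabs_inv, Rabs_mult, !Rabs_pos_eq by lra.
  right; field; lra.
Qed.

Lemma Rabs_partial_le F w i b :
  ex_derive_le (fun x => F (upd w i x)) (w i) b -> Rabs (partial F w i) <= b.
Proof. intros [d [Hd Hdb]]; unfold partial; rewrite (is_derive_unique _ _ _ Hd); exact Hdb. Qed.

Lemma ex_derive_le_upd w i j : ex_derive_le (fun x => upd w i x j) (w i) 1.
Proof.
  unfold upd; destruct (widx_eq_dec i j).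
  - exists 1; split; [apply (is_derive_id (w i)) | rewrite Rabs_R1; lra].
  - eapply ex_derive_le_weaken; [| apply ex_derive_le_const]; lra.
Qed.

Lemma upd_id w i : upd w i (w i) = w.
Proof.
  apply functional_extensionality; intros j; unfold upd.
  destruct (widx_eq_dec i j) as [-> | _]; reflexivity.
Qed.

Definition subnet (j : widx) : nat :=
  match j with Wout k | Wconv _ _ _ _ _ k | Wbias _ _ k => k end.

Lemma upd_other_subnet w i x j : subnet j <> subnet i -> upd w i x j = w j.
Proof.
  intros H; unfold upd; destruct (widx_eq_dec i j) as [-> | _]; [congruence | reflexivity].
Qed.

Lemma outp_upd_other_subnet sigma d1 d2 kappa L w i x xx r a b s k :
  k <> subnet i ->
  outp sigma d1 d2 kappa L (upd w i x) xx r a b s k = outp sigma d1 d2 kappa L w xx r a b s k.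
Proof.
  intros Hk; revert a b s; induction r as [|r IH]; intros a b s; [reflexivity |].
  cbn [outp]; f_equal; f_equal.
  - apply sum1_ext; intros; apply sum1_ext; intros; apply sum1_ext; intros.
    destruct andb; [rewrite IH, upd_other_subnet by auto |]; reflexivity.
  - apply upd_other_subnet; auto.
Qed.

Lemma fk_upd_other_subnet sigma d1 d2 kappa L w i x xx k :
  k <> subnet i -> fk sigma d1 d2 kappa L (upd w i x) xx k = fk sigma d1 d2 kappa L w xx k.
Proof.
  intros Hk; unfold fk; f_equal.
  apply sum1_ext; intros; apply sum1_ext; intros; apply outp_upd_other_subnet, Hk.
Qed.

Lemma fan_in_le kappa L r :
  (1 <= kappa)%nat ->
  (ksz kappa L r * (Msz kappa L (S r) * Msz kappa L (S r))
     <= 2 * kappa * kappa * kappa * kappa)%nat.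
Proof.
  intros Hk.
  assert (ksz kappa L r <= 2 * kappa * kappa)%nat
    by (unfold ksz; destruct Nat.eqb; [| destruct Nat.eqb]; nia).
  assert (Msz kappa L (S r) <= kappa)%nat
    by (unfold Msz; destruct Nat.eqb; [| destruct Nat.eqb]; lia).
  replace (2 * kappa * kappa * kappa * kappa)%nat with (2 * kappa * kappa * (kappa * kappa))%nat
    by ring.
  apply Nat.mul_le_mono; [| apply Nat.mul_le_mono]; assumption.
Qed.

Definition is_image (d1 d2 : nat) (x : nat -> nat -> R) : Prop :=
  forall a b, (1 <= a <= d1)%nat -> (1 <= b <= d2)%nat -> 0 <= x a b <= 1.

Lemma ksz_last kappa L : (0 < L)%nat -> ksz kappa L L = 1%nat.
Proof. intros HL; unfold ksz; destruct (Nat.eqb_spec L 0); [lia | now rewrite Nat.eqb_refl]. Qed.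

Section Network.

Variables (sigma : R -> R) (V Sd : R) (d1 d2 kappa L Kn : nat) (Bn gam : R).
Variables (w : wvec) (i : widx).

Hypothesis sigma_bounded : forall y, Rabs (sigma y) <= V.
Hypothesis sigma_derivable : forall y, ex_derive sigma y.
Hypothesis Derive_sigma_bounded : forall y, Rabs (Derive sigma y) <= Sd.
Hypothesis V_ge1 : 1 <= V.
Hypothesis Bn_ge1 : 1 <= Bn.
Hypothesis gam_ge1 : 1 <= gam.
Hypothesis kappa_ge1 : (1 <= kappa)%nat.
Hypothesis L_gt0 : (0 < L)%nat.
Hypothesis conv_weights_bounded : forall r t1 t2 s1 s2 k, (2 <= r <= L)%nat ->
  (1 <= t1 <= Msz kappa L r)%nat -> (1 <= t2 <= Msz kappa L r)%nat ->
  (1 <= s1 <= ksz kappa L (r - 1))%nat -> (1 <= s2 <= ksz kappa L r)%nat ->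
  (1 <= k <= Kn)%nat -> Rabs (w (Wconv r t1 t2 s1 s2 k)) <= Bn.
Hypothesis out_weights_bounded : forall k, (1 <= k <= Kn)%nat -> Rabs (w (Wout k)) <= gam.

Let fan_in := INR (2 * kappa * kappa * kappa * kappa).

(* The derivative of a layer-r output in any weight is at most deriv_const r * Bn ^ r. *)
Fixpoint deriv_const (r : nat) : R :=
  match r with
  | O => 0
  | S r => Sd * (fan_in * V + 1 + fan_in * deriv_const r)
  end.

Lemma Sd_ge0 : 0 <= Sd.
Proof. eapply Rle_trans; [apply Rabs_pos | apply (Derive_sigma_bounded 0)]. Qed.

Lemma deriv_const_ge0 r : 0 <= deriv_const r.
Proof.
  assert (0 <= fan_in) by apply pos_INR.
  pose proof Sd_ge0.
  induction r as [|r IH]; simpl; [lra |].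
  apply Rmult_le_pos; [lra |].
  assert (0 <= fan_in * V) by (apply Rmult_le_pos; lra).
  assert (0 <= fan_in * deriv_const r) by (apply Rmult_le_pos; lra).
  lra.
Qed.

Lemma Rabs_outp_le w' xx r a b s k :
  is_image d1 d2 xx -> (r = 0 -> 1 <= a <= d1 /\ 1 <= b <= d2)%nat ->
  Rabs (outp sigma d1 d2 kappa L w' xx r a b s k) <= V.
Proof.
  intros Hxx Hab; destruct r as [|r]; [| apply sigma_bounded].
  destruct (Hab eq_refl); destruct (Hxx a b) as [Hx0 Hx1]; auto.
  cbn [outp]; rewrite Rabs_pos_eq; lra.
Qed.

Lemma fan_in_bound r T :
  0 <= T ->
  INR (ksz kappa L r) * (INR (Msz kappa L (S r)) * (INR (Msz kappa L (S r)) * T)) <= fan_in * T.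
Proof.
  intros HT.
  replace (INR (ksz kappa L r) * (INR (Msz kappa L (S r)) * (INR (Msz kappa L (S r)) * T)))
    with (INR (ksz kappa L r * (Msz kappa L (S r) * Msz kappa L (S r))) * T)
    by (rewrite !mult_INR; ring).
  apply Rmult_le_compat_r, le_INR, fan_in_le; assumption.
Qed.

(* Layer-1 weights are unbounded, but they multiply inputs, whose derivative is zero. *)
Lemma Rabs_conv_weight_mul_deriv_const_le r t1 t2 s1 s k :
  (S r <= L)%nat -> (1 <= t1 <= Msz kappa L (S r))%nat -> (1 <= t2 <= Msz kappa L (S r))%nat ->
  (1 <= s1 <= ksz kappa L r)%nat -> (1 <= s <= ksz kappa L (S r))%nat -> (1 <= k <= Kn)%nat ->
  Rabs (w (Wconv (S r) t1 t2 s1 s k)) * deriv_const r <= Bn * deriv_const r.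
Proof.
  intros HrL Ht1 Ht2 Hs1 Hs Hk; destruct r as [|r]; [simpl; lra |].
  apply Rmult_le_compat_r; [apply deriv_const_ge0 |].
  apply conv_weights_bounded; simpl; rewrite ?Nat.sub_0_r; lia.
Qed.

Lemma deriv_const_S_le r P :
  1 <= P -> (fan_in * (V + deriv_const r * P) + 1) * Sd <= deriv_const (S r) * P.
Proof.
  intros HP; pose proof Sd_ge0; pose proof (deriv_const_ge0 r).
  assert (0 <= fan_in) by apply pos_INR.
  assert (0 <= fan_in * V) by nra.
  simpl deriv_const; rewrite (Rmult_comm _ Sd), Rmult_assoc; apply Rmult_le_compat_l; nra.
Qed.

Lemma outp_derive_le xx r a b s k :
  is_image d1 d2 xx -> (r <= L)%nat -> (1 <= a)%nat -> (1 <= b)%nat ->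
  (1 <= s <= ksz kappa L r)%nat -> (1 <= k <= Kn)%nat ->
  ex_derive_le (fun x => outp sigma d1 d2 kappa L (upd w i x) xx r a b s k) (w i)
    (deriv_const r * Bn ^ r).
Proof.
  intros Hxx; revert a b s; induction r as [|r IH]; intros a b s HrL Ha Hb Hs Hk.
  { eapply ex_derive_le_weaken; [| apply ex_derive_le_constant; reflexivity]; simpl; lra. }
  set (T := V + deriv_const r * Bn ^ S r).
  assert (HBr : 1 <= Bn ^ S r) by (apply pow_R1_Rle; lra).
  assert (HT : 0 <= T) by (pose proof (deriv_const_ge0 r); unfold T; nra).
  assert (Hpre : ex_derive_le (fun x =>
      sum1 (ksz kappa L r) (fun s1 => sum1 (Msz kappa L (S r)) (fun t1 =>
        sum1 (Msz kappa L (S r)) (fun t2 =>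
          if andb (Nat.leb (a + t1 - 1) d1) (Nat.leb (b + t2 - 1) d2)
          then upd w i x (Wconv (S r) t1 t2 s1 s k) *
               outp sigma d1 d2 kappa L (upd w i x) xx r (a + t1 - 1) (b + t2 - 1) s1 k
          else 0)))
      + upd w i x (Wbias (S r) s k)) (w i) (fan_in * T + 1)).
  { apply ex_derive_le_plus; [| apply ex_derive_le_upd].
    eapply ex_derive_le_weaken; [apply fan_in_bound, HT | apply ex_derive_le_sum1_const;
      intros s1 Hs1; apply ex_derive_le_sum1_const; intros t1 Ht1;
      apply ex_derive_le_sum1_const; intros t2 Ht2].
    destruct (andb _ _) eqn:Hin;
      [| eapply ex_derive_le_weaken; [| apply ex_derive_le_const]; exact HT].
    apply andb_prop in Hin as [Ha' Hb']; apply Nat.leb_le in Ha', Hb'.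
    eapply ex_derive_le_weaken; [| apply ex_derive_le_mult with
      (vf := Rabs (w (Wconv (S r) t1 t2 s1 s k))) (vg := V);
      [apply ex_derive_le_upd | apply IH | rewrite upd_id .. ]]; try lia.
    - assert (0 <= Bn ^ r) by (apply pow_le; lra).
      assert (Hw := Rabs_conv_weight_mul_deriv_const_le r t1 t2 s1 s k HrL Ht1 Ht2 Hs1 Hs Hk).
      unfold T; rewrite <- tech_pow_Rmult; nra.
    - lra.
    - apply Rabs_outp_le; [exact Hxx | lia]. }
  cbn [outp]; eapply ex_derive_le_weaken;
    [| exact (ex_derive_le_comp sigma _ _ _ Sd sigma_derivable Derive_sigma_bounded Hpre)].
  apply deriv_const_S_le, HBr.
Qed.

Lemma Rabs_fk_le w' xx k :
  is_image d1 d2 xx -> Rabs (fk sigma d1 d2 kappa L w' xx k) <= V.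
Proof.
  intros Hxx; unfold fk; cbv zeta.
  apply Rabs_avg2_le; try lia.
  intros; apply Rabs_outp_le; [exact Hxx | lia].
Qed.

Lemma fk_derive_le xx k :
  is_image d1 d2 xx -> (1 <= k <= Kn)%nat ->
  ex_derive_le (fun x => fk sigma d1 d2 kappa L (upd w i x) xx k) (w i) (deriv_const L * Bn ^ L).
Proof.
  intros Hxx Hk; unfold fk; cbv zeta.
  apply ex_derive_le_avg2; try lia.
  intros; apply outp_derive_le; rewrite ?ksz_last; auto; lia.
Qed.

Lemma Rabs_fnet_le xx :
  is_image d1 d2 xx -> Rabs (fnet sigma d1 d2 kappa L Kn w xx) <= INR Kn * (gam * V).
Proof.
  intros Hxx; apply Rabs_sum1_le; intros k Hk; rewrite Rabs_mult.
  apply Rmult_le_compat; auto using Rabs_pos, Rabs_fk_le.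
Qed.

(* Only the subnetwork containing weight i depends on it. *)
Lemma fnet_derive_le xx :
  is_image d1 d2 xx ->
  ex_derive_le (fun x => fnet sigma d1 d2 kappa L Kn (upd w i x) xx) (w i)
    (V + gam * (deriv_const L * Bn ^ L)).
Proof.
  intros Hxx.
  assert (0 <= deriv_const L * Bn ^ L)
    by (apply Rmult_le_pos; [apply deriv_const_ge0 | apply pow_le; lra]).
  eapply ex_derive_le_weaken; [apply (sum1_indicator_le Kn (subnet i)); nra |].
  apply ex_derive_le_sum1; intros k Hk.
  destruct (Nat.eqb_spec k (subnet i)) as [_ | Hki].
  - eapply ex_derive_le_weaken; [| apply ex_derive_le_mult with (vf := gam) (vg := V);
      [apply ex_derive_le_upd | apply fk_derive_le | rewrite upd_id .. ]]; auto.
    + lra.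
    + apply Rabs_fk_le, Hxx.
  - apply ex_derive_le_constant; intros t.
    rewrite !fk_upd_other_subnet, !upd_other_subnet by (simpl; auto).
    reflexivity.
Qed.

Lemma sq_loss_derive_le n X Y :
  (1 <= n)%nat ->
  (forall j, (1 <= j <= n)%nat -> is_image d1 d2 (X j)) ->
  (forall j, (1 <= j <= n)%nat -> Y j = 0 \/ Y j = 1) ->
  ex_derive_le (fun x => / INR n * sum1 n (fun j =>
      (Y j - fnet sigma d1 d2 kappa L Kn (upd w i x) (X j)) ^ 2)) (w i)
    (2 * (1 + INR Kn * (gam * V)) * (V + gam * (deriv_const L * Bn ^ L))).
Proof.
  intros Hn HX HY.
  assert (Hn0 : 0 < INR n) by (apply lt_0_INR; lia).
  set (c := 2 * (1 + INR Kn * (gam * V)) * (V + gam * (deriv_const L * Bn ^ L))).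
  eapply ex_derive_le_weaken; [| apply ex_derive_le_scal, (ex_derive_le_sum1_const _ _ _ c)].
  { rewrite Rabs_inv, Rabs_pos_eq by lra; right; field; lra. }
  intros j Hj; apply ex_derive_le_sqr.
  - eapply ex_derive_le_weaken; [| apply ex_derive_le_minus;
      [apply ex_derive_le_const | apply fnet_derive_le, HX, Hj]]; lra.
  - rewrite upd_id; eapply Rle_trans; [apply Rabs_triang |]; rewrite Rabs_Ropp.
    pose proof (Rabs_fnet_le (X j) (HX j Hj)).
    destruct (HY j Hj) as [-> | ->]; rewrite ?Rabs_R0, ?Rabs_R1; lra.
Qed.

Lemma penalty_derive_le c4 :
  0 <= c4 ->
  ex_derive_le (fun x => c4 * sum1 Kn (fun k => upd w i x (Wout k) ^ 2)) (w i) (2 * c4 * gam).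
Proof.
  intros Hc4.
  eapply ex_derive_le_weaken; [| apply ex_derive_le_scal, (ex_derive_le_sum1 _ _ _
    (fun k => if Nat.eqb k (subnet i) then 2 * gam * 1 else 0))].
  - rewrite Rabs_pos_eq by lra.
    assert (sum1 Kn (fun k => if Nat.eqb k (subnet i) then 2 * gam * 1 else 0) <= 2 * gam * 1)
      by (apply sum1_indicator_le; lra).
    nra.
  - intros k Hk; destruct (widx_eq_dec i (Wout k)) as [-> | Hik].
    + rewrite Nat.eqb_refl; apply ex_derive_le_sqr; [apply ex_derive_le_upd |].
      rewrite upd_id; auto.
    + eapply ex_derive_le_weaken; [| apply ex_derive_le_constant].
      * destruct Nat.eqb; lra.
      * intros t; unfold upd; destruct (widx_eq_dec i (Wout k)); [congruence | reflexivity].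
Qed.

Lemma Femp_derive_le n c4 X Y :
  (1 <= n)%nat -> (1 <= Kn)%nat -> 0 <= c4 ->
  (forall j, (1 <= j <= n)%nat -> is_image d1 d2 (X j)) ->
  (forall j, (1 <= j <= n)%nat -> Y j = 0 \/ Y j = 1) ->
  ex_derive_le (fun x => Femp sigma d1 d2 kappa L n Kn c4 X Y (upd w i x)) (w i)
    ((2 * (1 + V) * (V + deriv_const L) + 2 * c4) * INR Kn * gam ^ 2 * Bn ^ L).
Proof.
  intros Hn HKn Hc4 HX HY; unfold Femp.
  eapply ex_derive_le_weaken; [| apply ex_derive_le_plus;
    [apply sq_loss_derive_le; assumption | apply penalty_derive_le, Hc4]].
  set (K := INR Kn); set (E := deriv_const L); set (BL := Bn ^ L).
  assert (1 <= K) by (apply (le_INR 1); lia).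
  assert (0 <= E) by apply deriv_const_ge0.
  assert (1 <= BL) by (apply pow_R1_Rle; lra).
  assert (1 <= K * gam) by nra.
  assert (1 <= gam * BL) by nra.
  assert (0 <= 1 + K * (gam * V) <= K * gam * (1 + V)) by nra.
  assert (0 <= V + gam * (E * BL) <= gam * BL * (V + E)) by nra.
  assert ((1 + K * (gam * V)) * (V + gam * (E * BL))
          <= K * gam * (1 + V) * (gam * BL * (V + E))) by (apply Rmult_le_compat; lra).
  assert (gam <= K * gam ^ 2 * BL) by nra.
  nra.
Qed.

End Network.

Definition subnet_size (kappa L : nat) : R := sum_idx kappa L 1 (fun _ => 1).

Lemma sum_idx_const kappa L Kn c :
  sum_idx kappa L Kn (fun _ => c) = INR Kn * c * subnet_size kappa L.
Proof.
  unfold subnet_size, sum_idx; rewrite !Rmult_plus_distr_l.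
  f_equal; [f_equal |].
  - rewrite !sum1_const; simpl; ring.
  - repeat (rewrite <- sum1_scal; apply sum1_ext; intros ? ?).
    rewrite !sum1_const; simpl; ring.
  - repeat (rewrite <- sum1_scal; apply sum1_ext; intros ? ?).
    rewrite !sum1_const; simpl; ring.
Qed.

Lemma subnet_size_ge1 kappa L : 1 <= subnet_size kappa L.
Proof.
  unfold subnet_size, sum_idx; cbn [sum1].
  assert (Hnn : forall m f, (forall s, 0 <= f s) -> 0 <= sum1 m f)
    by (intros; apply sum1_ge0; auto).
  assert (0 <= sum1 L (fun r => sum1 (Msz kappa L r) (fun t1 => sum1 (Msz kappa L r) (fun t2 =>
      sum1 (ksz kappa L (r - 1)) (fun s1 => sum1 (ksz kappa L r) (fun s2 => 0 + 1))))))
    by (repeat (apply Hnn; intros); lra).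
  assert (0 <= sum1 L (fun r => sum1 (ksz kappa L r) (fun s2 => 0 + 1)))
    by (repeat (apply Hnn; intros); lra).
  lra.
Qed.

Lemma sum_idx_le kappa L Kn g h :
  (forall j, g j <= h j) -> sum_idx kappa L Kn g <= sum_idx kappa L Kn h.
Proof.
  intros H; unfold sum_idx.
  repeat apply Rplus_le_compat; repeat (apply sum1_le; intros); apply H.
Qed.

Lemma grad_norm_le kappa L Kn F w P :
  (forall j, Rabs (partial F w j) <= P) ->
  grad_norm kappa L Kn F w <= sqrt (INR Kn * subnet_size kappa L) * P.
Proof.
  intros H.
  assert (HP : 0 <= P) by (eapply Rle_trans; [apply Rabs_pos | apply (H (Wout 0))]).
  assert (HQ := subnet_size_ge1 kappa L).
  assert (HK := pos_INR Kn).
  unfold grad_norm.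
  rewrite <- (sqrt_pow2 P HP); rewrite <- sqrt_mult_alt by nra.
  apply sqrt_le_1_alt.
  replace (INR Kn * subnet_size kappa L * P ^ 2) with (sum_idx kappa L Kn (fun _ => P ^ 2))
    by (rewrite sum_idx_const; ring).
  apply sum_idx_le; intros j.
  rewrite <- pow2_abs; apply pow_incr; split; [apply Rabs_pos | apply H].
Qed.

Lemma Rpower_3_2 x : 0 < x -> Rpower x (3 / 2) = x * sqrt x.
Proof.
  intros Hx; replace (3 / 2) with (1 + / 2) by field.
  rewrite Rpower_plus, Rpower_1, Rpower_sqrt by lra; reflexivity.
Qed.

Lemma sqrt_ratio_max_ge1 tn Ln F : 0 < Ln <= tn -> 1 <= sqrt (tn / Ln * Rmax F 1).
Proof.
  intros [HLn HLt].
  assert (1 <= tn / Ln) by (apply (Rmult_le_reg_r Ln); [lra | field_simplify; lra]).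
  assert (1 <= Rmax F 1) by apply Rmax_r.
  rewrite <- sqrt_1 at 1; apply sqrt_le_1_alt; nra.
Qed.

Lemma sqrt_count_mul_monomial_le K Q C gam Bn L s :
  0 < K -> 0 <= Q -> 0 <= C -> 1 <= Bn -> 1 <= s ->
  sqrt (K * Q) * (C * K * gam ^ 2 * Bn ^ L)
    <= C * sqrt Q * Rpower K (3 / 2) * Bn ^ (2 * L) * gam ^ 2 * s.
Proof.
  intros HK HQ HC HBn Hs.
  assert (HBL : Bn ^ L <= Bn ^ (2 * L)) by (apply Rle_pow; lra || lia).
  assert (0 <= Bn ^ L) by (apply pow_le; lra).
  rewrite Rpower_3_2, sqrt_mult_alt by lra.
  set (A := C * sqrt Q * (K * sqrt K) * gam ^ 2).
  assert (HA : 0 <= A).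
  { unfold A; apply Rmult_le_pos; [| apply pow2_ge_0].
    repeat apply Rmult_le_pos; auto using sqrt_pos; lra. }
  apply Rle_trans with (A * Bn ^ L); [right; unfold A; ring |].
  apply Rle_trans with (A * (Bn ^ (2 * L) * s)); [apply Rmult_le_compat_l; nra |].
  right; unfold A; ring.
Qed.

Theorem lemma3 :
  forall (sigma : R -> R),
  (exists S, forall x, Rabs (sigma x) <= S) ->
  (forall x, ex_derive sigma x) ->
  (exists S', forall x, Rabs (Derive sigma x) <= S') ->
  forall (d1 d2 kappa L : nat) (c4 : R),
  (1 <= kappa)%nat -> (kappa <= Nat.min d1 d2)%nat -> (2 <= L)%nat -> 0 < c4 ->
  exists c8 : R, 0 < c8 /\
  forall (n Kn : nat) (X : nat -> nat -> nat -> R) (Y : nat -> R)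
         (tn Ln gam Bn : R) (w v : wvec),
  (1 <= n)%nat -> (1 <= Kn)%nat ->
  (forall i a b, (1 <= i <= n)%nat -> (1 <= a <= d1)%nat -> (1 <= b <= d2)%nat ->
     0 <= X i a b <= 1) ->
  (forall i, (1 <= i <= n)%nat -> Y i = 0 \/ Y i = 1) ->
  0 < tn -> 0 < Ln -> Ln <= tn -> 1 <= gam -> 1 <= Bn ->
  (forall k, (1 <= k <= Kn)%nat -> Rabs (w (Wout k)) <= gam) ->
  (forall r s2 k, (2 <= r <= L)%nat -> (1 <= s2 <= ksz kappa L r)%nat ->
     (1 <= k <= Kn)%nat -> Rabs (w (Wbias r s2 k)) <= Bn) ->
  (forall r t1 t2 s1 s2 k, (2 <= r <= L)%nat ->
     (1 <= t1 <= Msz kappa L r)%nat -> (1 <= t2 <= Msz kappa L r)%nat ->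
     (1 <= s1 <= ksz kappa L (r - 1))%nat -> (1 <= s2 <= ksz kappa L r)%nat ->
     (1 <= k <= Kn)%nat -> Rabs (w (Wconv r t1 t2 s1 s2 k)) <= Bn) ->
  (inf_dist kappa L Kn w v) ^ 2 <=
    2 * tn / Ln * Rmax (Femp sigma d1 d2 kappa L n Kn c4 X Y v) 1 ->
  grad_norm kappa L Kn (Femp sigma d1 d2 kappa L n Kn c4 X Y) w <=
    c8 * Rpower (INR Kn) (3 / 2) * Bn ^ (2 * L) * gam ^ 2 *
    sqrt (tn / Ln * Rmax (Femp sigma d1 d2 kappa L n Kn c4 X Y v) 1).
Proof.
  intros sigma [Sb HSb] Hder [Sd HSd] d1 d2 kappa L c4 Hk1 _ HL Hc4.
  set (V := Rmax Sb 1).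
  assert (HV1 : 1 <= V) by apply Rmax_r.
  assert (HV : forall y, Rabs (sigma y) <= V)
    by (intros; eapply Rle_trans; [apply HSb | apply Rmax_l]).
  assert (HE := deriv_const_ge0 sigma V Sd kappa HSd HV1 L).
  set (C := 2 * (1 + V) * (V + deriv_const V Sd kappa L) + 2 * c4).
  assert (HC : 0 < C) by (unfold C; nra).
  assert (HQ : 1 <= sqrt (subnet_size kappa L))
    by (rewrite <- sqrt_1; apply sqrt_le_1_alt, subnet_size_ge1).
  exists (C * sqrt (subnet_size kappa L)); split; [nra |].
  intros n Kn X Y tn Ln gam Bn w v Hn HKn HX HY Htn HLn HLt Hgam HBn Hout _ Hconv _.
  eapply Rle_trans; [apply grad_norm_le; intros j; apply Rabs_partial_le;
    apply (Femp_derive_le sigma V Sd d1 d2 kappa L Kn Bn gam); auto; try lia; try lra;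
    intros i Hi a b; apply HX, Hi |].
  apply sqrt_count_mul_monomial_le; try lra.
  - apply lt_0_INR; lia.
  - pose proof (subnet_size_ge1 kappa L); lra.
  - apply sqrt_ratio_max_ge1; lra.
Qed.
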